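(* The relation of $\mathcal{C}$-$\mathrm{HH}$-symmetry is not transitive on the class of $\mathcal{C}$-$\mathrm{HH}$ graphs: there exist finite connected $\mathcal{C}$-$\mathrm{HH}$ graphs $G_1,G_2,G_3$ such that $G_1,G_2$ are $\mathcal{C}$-$\mathrm{HH}$-symmetric and $G_2,G_3$ are $\mathcal{C}$-$\mathrm{HH}$-symmetric, but $G_1,G_3$ are not $\mathcal{C}$-$\mathrm{HH}$-symmetric.
   Context: Graphs are simple; subgraphs are induced. A homomorphism maps edges to edges. A graph $G$ is $\mathcal{C}$-$\mathrm{HH}$ if every homomorphism from a finite connected induced subgraph of $G$ into $G$ extends to a homomorphism $G\to G$. For graphs $G_1,G_2$, $G_1$ is $\mathcal{C}$-$\mathrm{HH}$-morphic to $G_2$ if every homomorphism from a finite connected induced subgraph $A$ of $G_1$ onto an induced subgraph $B$ of $G_2$ extends to a homomorphism $G_1 \to G_2$; $G_1,G_2$ are $\mathcal{C}$-$\mathrm{HH}$-symmetric if each is $\mathcal{C}$-$\mathrm{HH}$-morphic to the other. *)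

From mathcomp Require Import all_boot.
Set Implicit Arguments. Unset Strict Implicit. Unset Printing Implicit Defensive.

Definition simple_graph (T : finType) (e : rel T) : Prop :=
  symmetric e /\ irreflexive e.

Definition connected_in (T : finType) (e : rel T) (A : {set T}) : Prop :=
  (exists x, x \in A) /\
  (forall x y, x \in A -> y \in A ->
     connect [rel u v | [&& e u v, u \in A & v \in A]] x y).

Definition hom_on (T1 T2 : finType) (e1 : rel T1) (e2 : rel T2)
  (A : {set T1}) (f : T1 -> T2) : Prop :=
  forall x y, x \in A -> y \in A -> e1 x y -> e2 (f x) (f y).

Definition hom (T1 T2 : finType) (e1 : rel T1) (e2 : rel T2) (g : T1 -> T2) : Prop :=
  forall x y, e1 x y -> e2 (g x) (g y).

(* G1 is C-HH-morphic to G2: every homomorphism from a finite connected induced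
   subgraph of G1 onto (the induced subgraph of G2 on) its image extends to a
   homomorphism G1 -> G2. *)
Definition CHH_morphic (T1 T2 : finType) (e1 : rel T1) (e2 : rel T2) : Prop :=
  forall (A : {set T1}) (f : T1 -> T2),
    connected_in e1 A -> hom_on e1 e2 A f ->
    exists g : T1 -> T2, hom e1 e2 g /\ (forall x, x \in A -> g x = f x).

Definition CHH (T : finType) (e : rel T) : Prop := CHH_morphic e e.

Definition CHH_symmetric (T1 T2 : finType) (e1 : rel T1) (e2 : rel T2) : Prop :=
  CHH_morphic e1 e2 /\ CHH_morphic e2 e1.

Definition fin_conn_CHH_graph (T : finType) (e : rel T) : Prop :=
  simple_graph e /\ connected_in e [set: T] /\ CHH e.

From mathcomp Require Import all_boot.
Set Implicit Arguments. Unset Strict Implicit. Unset Printing Implicit Defensive.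

(* The witnesses are G1 = C6, G2 = K2 and G3 = P5.  C6 and P5 are connected and
   bipartite.  On a connected domain a homomorphism into K2 is a 2-colouring,
   determined by its value at one vertex, so it is a global 2-colouring or its
   swap: every bipartite graph is C-HH-morphic to K2.  Conversely a homomorphism
   from K2 or from a single vertex extends into any graph without isolated
   vertices.  That C6 and P5 are themselves C-HH is a finite check, done by an
   exhaustive search.  Finally the path 0-1-2-3-4 of C6 maps isomorphically onto
   P5, and an extension would send vertex 5 to a common neighbour of the two
   ends of P5, which does not exist. *)

Section MapEnumeration.
Variables (T U : eqType) (cs : seq U).
Variables (P : (T -> U) -> bool) (Q : (T -> U) -> T -> seq T -> bool).

(* Enumeration of the maps that agree with [f] outside [s] and take values in
   [cs] on [s], by successive updates along [s]; [Q g x rest] is tested after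
   [x] is assigned and prunes the branch when false.  The [if]s replace [==>]
   and [&&], which would force both branches under call-by-value evaluation. *)
Fixpoint all_maps (s : seq T) (f : T -> U) : bool :=
  if s is x :: s' then
    all (fun y => let g := [eta f with x |-> y] in if Q g x s' then all_maps s' g else true) cs
  else P f.

Fixpoint has_maps (s : seq T) (f : T -> U) : bool :=
  if s is x :: s' then
    has (fun y => let g := [eta f with x |-> y] in if Q g x s' then has_maps s' g else false) cs
  else P f.

Lemma all_mapsW s f : (forall g, P g) -> all_maps s f.
Proof. by move=> Pg; elim: s f => //= x s IHs f; apply/allP=> y _; case: ifP. Qed.

Lemma all_maps_spec s f (h : T -> U) : {in s, forall x, h x \in cs} ->
  (forall g s1 x s2, s = s1 ++ x :: s2 ->
     (forall z, g z = if z \in x :: s1 then h z else f z) -> Q g x s2) ->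
  all_maps s f -> exists g, P g /\ forall z, g z = if z \in s then h z else f z.
Proof.
elim: s f => [|x s IHs] f hcs hQ /=; first by exists f.
have hQx : Q [eta f with x |-> h x] x s.
  by apply: (hQ _ [::]) => // z; rewrite mem_seq1 /=; case: eqP => [->|].
move=> /allP/(_ (h x) (hcs x (mem_head x s))); rewrite hQx.
case/IHs=> [z zs|g s1 y s2 Es gE|g [Pg gE]].
- by apply: hcs; rewrite inE zs orbT.
- apply: (hQ g (x :: s1)); first by rewrite Es.
  move=> z; rewrite gE !inE /=.
  by case: (z == y); case: (z \in s1); case: eqP => [->|] //=.
- exists g; split=> // z; rewrite gE inE /=.
  by case: eqP => [->|]; case: (_ \in s).
Qed.

Lemma has_maps_spec s f : has_maps s f ->
  exists g, P g /\ forall x, x \notin s -> g x = f x.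
Proof.
elim: s f => [|x s IHs] f /=; first by exists f.
case/hasP=> y _; case: ifP => // _ /IHs[g [Pg gE]]; exists g; split=> // z.
by rewrite inE negb_or => /andP[/negbTE zx zs]; rewrite gE //= zx.
Qed.

End MapEnumeration.

Lemma path_cross (T : Type) (r : rel T) (P : pred T) x p :
  path r x p -> P x -> ~~ P (last x p) -> exists u v, [&& r u v, P u & ~~ P v].
Proof.
elim: p x => [|y p IHp] x /=; first by move=> _ ->.
case/andP=> rxy pp Px; case Py: (P y); first exact: IHp.
by move=> _; exists x, y; rewrite rxy Px Py.
Qed.

Section CutConnectivity.
Variables (T : finType) (e : rel T) (vs : seq T).
Hypothesis vs_full : forall x, x \in vs.

Definition crossing (D S : T -> bool) : bool :=
  has (fun x => has (fun y => [&& D x, D y, S x, ~~ S y & e x y]) vs) vs.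

(* Every 2-partition of [D] is crossed by an edge.  Only the implication from
   connectivity is proved, as the test merely filters the domains to check. *)
Definition cut_connectedb (D : T -> bool) : bool :=
  has D vs &&
  all_maps [:: true; false]
    (fun S => has (predI D S) vs && has (predI D (predC S)) vs ==> crossing D S)
    (fun _ _ _ => true) [seq x <- vs | D x] (fun _ => false).

Lemma connected_cut_connectedb D : connected_in e [set x | D x] -> cut_connectedb D.
Proof.
case=> [[x0 Dx0] conn]; apply/andP; split.
  by apply/hasP; exists x0; rewrite ?vs_full // -[D x0]inE.
apply: all_mapsW => S; apply/implyP=> /andP[/hasP[x _ /andP[Dx Sx]]].
case/hasP=> y _ /andP[Dy Sy]; rewrite -[D x]inE -[D y]inE in Dx Dy.
case/connectP: (conn x y Dx Dy) => p pp ylast; rewrite ylast in Sy.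
have [u [v /and3P[/and3P[euv Du Dv] Su Sv]]] := path_cross (P := S) pp Sx Sy.
apply/hasP; exists u; rewrite ?vs_full //; apply/hasP; exists v; rewrite ?vs_full //.
by rewrite -!(in_set D) Du Dv Su Sv euv.
Qed.

End CutConnectivity.

Section CHHDecision.
Variables (T1 T2 : finType) (e1 : rel T1) (e2 : rel T2) (vs1 : seq T1) (vs2 : seq T2).
Hypotheses (vs1_full : forall x, x \in vs1) (vs2_full : forall y, y \in vs2).

Definition hom_onb (D : T1 -> bool) (f : T1 -> T2) : bool :=
  all (fun x => all (fun y => [&& D x, D y & e1 x y] ==> e2 (f x) (f y)) vs1) vs1.

Definition hom_at (D : T1 -> bool) (f : T1 -> T2) (x : T1) : bool :=
  all (fun z => D z ==> (e1 x z ==> e2 (f x) (f z)) && (e1 z x ==> e2 (f z) (f x))) vs1.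

Lemma hom_on_hom_onb D f : hom_on e1 e2 [set x | D x] f -> hom_onb D f.
Proof.
move=> hf; apply/allP=> x _; apply/allP=> y _; apply/implyP=> /and3P[Dx Dy].
by apply: hf; rewrite inE.
Qed.

Lemma hom_on_hom_at D h g s1 x s2 y0 : hom_on e1 e2 [set x | D x] h ->
  [seq x <- vs1 | D x] = s1 ++ x :: s2 ->
  (forall z, g z = if z \in x :: s1 then h z else y0) ->
  hom_at (fun z => D z && (z \notin s2)) g x.
Proof.
move=> hh Es gE; have Dx : D x.
  by have := mem_filter D x vs1; rewrite Es mem_cat mem_head orbT vs1_full andbT.
apply/allP=> z _; apply/implyP=> /andP[Dz zs2].
have zs1 : z \in x :: s1.
  have : z \in s1 ++ x :: s2 by rewrite -Es mem_filter Dz vs1_full.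
  by rewrite mem_cat !inE (negbTE zs2) orbF orbC.
by rewrite !gE zs1 mem_head; apply/andP; split; apply/implyP; apply: hh; rewrite inE.
Qed.

Lemma hom_onbT_hom f : hom_onb xpredT f -> hom e1 e2 f.
Proof.
move=> /allP hf x y exy.
by move: (hf x (vs1_full x)) => /allP/(_ y (vs1_full y))/implyP; apply.
Qed.

Definition CHH_morphicb (y0 : T2) : bool :=
  all_maps [:: true; false] (fun D =>
    if cut_connectedb e1 vs1 D then
      all_maps vs2
        (fun f => if hom_onb D f then
           has_maps vs2 (hom_onb xpredT) (fun g x rest => hom_at (fun z => z \notin rest) g x)
             [seq x <- vs1 | ~~ D x] f
         else true)
        (fun f x rest => hom_at (fun z => D z && (z \notin rest)) f x)
        [seq x <- vs1 | D x] (fun _ => y0)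
    else true) (fun _ _ _ => true) vs1 (fun _ => false).

Lemma CHH_morphicb_sound y0 : CHH_morphicb y0 -> CHH_morphic e1 e2.
Proof.
move=> chk A h cA hA.
have bools (b : bool) : b \in [:: true; false] by case: b.
have [D [chkD DA]] :=
  all_maps_spec (h := fun x => x \in A) (fun x _ => bools _) (fun _ _ _ _ _ _ => isT) chk.
have {}DA : A = [set x | D x] by apply/setP=> x; rewrite inE DA vs1_full.
rewrite DA in cA hA; move: chkD; rewrite connected_cut_connectedb //.
case/(all_maps_spec (h := h) (fun y _ => vs2_full (h y))) => [g s1 x s2|f [ext fE]].
  exact: hom_on_hom_at.
have fh : {in [set x | D x], f =1 h}.
  by move=> x; rewrite inE => Dx; rewrite fE mem_filter Dx vs1_full.
move: ext; rewrite hom_on_hom_onb; last first.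
  by move=> x y Dx Dy exy; rewrite !fh //; apply: hA.
case/has_maps_spec=> g [/hom_onbT_hom hg gf].
exists g; split=> // x; rewrite DA inE => Dx.
by rewrite gf -?fh ?inE // mem_filter Dx.
Qed.

End CHHDecision.

(* [enum 'I_n] does not reduce under [vm_compute] ([insub] matches on the opaque
   [idP]), hence this explicit list of ordinals. *)
Fixpoint ord_seq n : seq 'I_n :=
  if n is n'.+1 then ord0 :: map (lift ord0) (ord_seq n') else [::].

Lemma mem_ord_seq n (x : 'I_n) : x \in ord_seq n.
Proof.
elim: n x => [[]|n IHn] x //=; rewrite inE.
case: (unliftP ord0 x) => [j ->|->]; rewrite ?eqxx // mem_map ?IHn ?orbT //.
exact: lift_inj.
Qed.

Lemma connected_prefix n (e : rel 'I_n) k : 0 < k <= n -> symmetric e ->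
  (forall x y : 'I_n, val y = (val x).+1 -> y < k -> e x y) ->
  connected_in e [set x : 'I_n | x < k].
Proof.
case/andP=> k0 kn sym_e e_succ; set A := [set x : 'I_n | x < k].
have n0 : 0 < n := leq_trans k0 kn.
set r := [rel u v | [&& e u v, u \in A & v \in A]].
have r_sym : connect_sym r.
  by apply: sym_connect_sym => u v /=; rewrite sym_e [(u \in A) && _]andbC.
have reach i : i < k -> forall x : 'I_n, val x = i -> connect r (Ordinal n0) x.
  elim: i => [|i IHi] ik x xi; first by rewrite (_ : x = Ordinal n0) //; apply: val_inj.
  have i_n : i < n := leq_trans (ltnW ik) kn.
  apply: connect_trans (IHi (ltnW ik) (Ordinal i_n) erefl) (connect1 _).
  by rewrite /= !inE e_succ ?xi //= ltnW.
split; first by exists (Ordinal n0); rewrite inE.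
move=> x y; rewrite !inE => xk yk.
by apply: connect_trans (reach _ yk y erefl); rewrite r_sym; apply: reach xk x erefl.
Qed.

Lemma connected_ord n (e : rel 'I_n) : 0 < n -> symmetric e ->
  (forall x y : 'I_n, val y = (val x).+1 -> e x y) -> connected_in e [set: 'I_n].
Proof.
move=> n0 sym_e e_succ.
have -> : [set: 'I_n] = [set x : 'I_n | x < n] by apply/setP=> x; rewrite !inE ltn_ord.
apply: connected_prefix => // [|x y xy _]; [by rewrite n0 /= | exact: e_succ].
Qed.

Lemma connected_no_isolated (T : finType) (e : rel T) :
  connected_in e [set: T] -> 1 < #|T| -> forall x, exists y, e x y.
Proof.
case=> _ conn T_gt1 x.
have : 0 < #|[predD1 T & x]| by move: T_gt1; rewrite (cardD1 x) inE.
case/card_gt0P=> y /andP[yx _]; have := conn x y; rewrite !inE => /(_ isT isT).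
case/connectP=> [[|z p]] /=; first by move=> _ yx'; rewrite yx' eqxx in yx.
by case/andP=> /and3P[exz _ _] _ _; exists z.
Qed.

Definition K2 : rel bool := fun b c => b != c.

Section TwoColourings.
Variables (T : finType) (e : rel T).

Lemma K2_hom_on_eq (A : {set T}) (f g : T -> bool) a :
  connected_in e A -> hom_on e K2 A f -> hom_on e K2 A g ->
  a \in A -> f a = g a -> {in A, f =1 g}.
Proof.
case=> _ conn hf hg aA fga x xA; apply/eqP.
have cl : closed [rel u v | [&& e u v, u \in A & v \in A]] [pred u | f u == g u].
  move=> u v /and3P[euv uA vA]; move: (hf u v uA vA euv) (hg u v uA vA euv).
  by rewrite /K2 !inE /=; case: (f u); case: (f v); case: (g u); case: (g v).
by move: (closed_connect cl (conn a x aA xA)); rewrite !inE fga eqxx => <-.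
Qed.

Lemma bipartite_CHH_morphic_K2 (c : T -> bool) : hom e K2 c -> CHH_morphic e K2.
Proof.
move=> hc A f cA hf; case: (cA) => [[a aA] _].
pose g := if c a == f a then c else negb \o c.
have hg : hom e K2 g.
  by rewrite /g; case: ifP => _ x y /hc //=; rewrite /K2 (inj_eq negb_inj).
exists g; split=> //; apply: K2_hom_on_eq cA _ hf aA _; first by move=> x y _ _ /hg.
by rewrite /g; case: eqP => //= /eqP; case: (c a); case: (f a).
Qed.

Lemma K2_CHH_morphic : symmetric e -> (forall y, exists z, e y z) -> CHH_morphic K2 e.
Proof.
move=> sym_e nbr A f [[a aA] _] hf; have [w ew] := nbr (f a).
exists (fun x => if x \in A then f x else w); split=> [x y xy|x -> //].
have [ax|ay] : a = x \/ a = y.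
  by move: xy; rewrite /K2; case: x; case: y => //= _; case: (a); auto.
- rewrite -ax in xy *; rewrite aA; case: ifP => [yA|_ //]; exact: hf.
- rewrite -ay in xy *; rewrite aA; case: ifP => [xA|_]; [exact: hf | by rewrite sym_e].
Qed.

Lemma bipartite_CHH_symmetric_K2 (c : T -> bool) :
  simple_graph e -> connected_in e [set: T] -> 1 < #|T| -> hom e K2 c ->
  CHH_symmetric e K2.
Proof.
move=> [sym_e _] conn T_gt1 hc; split; first exact: bipartite_CHH_morphic_K2 hc.
exact: K2_CHH_morphic sym_e (connected_no_isolated conn T_gt1).
Qed.

End TwoColourings.

Definition cycle_graph n : rel 'I_n := fun x y => (x.+1 %% n == y) || (y.+1 %% n == x).
Definition path_graph n : rel 'I_n := fun x y => (x.+1 == y) || (y.+1 == x).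
Arguments cycle_graph : clear implicits.
Arguments path_graph : clear implicits.

Lemma cycle_graph_simple n : 1 < n -> simple_graph (cycle_graph n).
Proof.
move=> n_gt1; split=> [x y|x]; first by rewrite /cycle_graph orbC.
rewrite /cycle_graph orbb; apply/negbTE/eqP=> x_fix.
have := ltn_ord x; rewrite leq_eqVlt => /orP[/eqP xn|xn].
  by rewrite xn modnn in x_fix; rewrite -xn -x_fix in n_gt1.
by rewrite modn_small // in x_fix; apply: (n_Sn x); rewrite x_fix.
Qed.

Lemma path_graph_simple n : simple_graph (path_graph n).
Proof.
split=> [x y|x]; first by rewrite /path_graph orbC.
by rewrite /path_graph orbb; apply/negbTE; rewrite neq_ltn ltnSn orbT.
Qed.

Lemma K2_simple : simple_graph K2.
Proof. by split=> [x y|x]; rewrite /K2 1?eq_sym ?eqxx. Qed.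

Lemma cycle_graph_connected n : 0 < n -> connected_in (cycle_graph n) [set: 'I_n].
Proof.
move=> n0; apply: connected_ord => // [x y|x y xy]; first by rewrite /cycle_graph orbC.
by rewrite /cycle_graph xy modn_small ?eqxx // -xy ltn_ord.
Qed.

Lemma path_graph_connected n : 0 < n -> connected_in (path_graph n) [set: 'I_n].
Proof.
move=> n0; apply: connected_ord => // [x y|x y xy]; first by rewrite /path_graph orbC.
by rewrite /path_graph xy eqxx.
Qed.

Lemma K2_connected : connected_in K2 [set: bool].
Proof.
split=> [|x y _ _]; first by exists true.
by case: (eqVneq x y) => [->|xy]; [exact: connect0 | apply: connect1; rewrite /= !inE /K2 xy].
Qed.

Lemma cycle_graph_2colouring n : ~~ odd n -> hom (cycle_graph n) K2 (fun x => odd x).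
Proof.
move=> n_even x y; rewrite /K2 /cycle_graph.
by case/orP=> /eqP <-; rewrite odd_mod ?(negbTE n_even) //=; case: (odd _).
Qed.

Lemma path_graph_2colouring n : hom (path_graph n) K2 (fun x => odd x).
Proof. by move=> x y; rewrite /K2 /path_graph; case/orP=> /eqP <- /=; case: (odd _). Qed.

Lemma cycle6_fin_conn_CHH : fin_conn_CHH_graph (cycle_graph 6).
Proof.
split; [exact: cycle_graph_simple | split; first exact: cycle_graph_connected].
by apply: (CHH_morphicb_sound (@mem_ord_seq 6) (@mem_ord_seq 6) (y0 := ord0)); vm_compute.
Qed.

Lemma path5_fin_conn_CHH : fin_conn_CHH_graph (path_graph 5).
Proof.
split; [exact: path_graph_simple | split; first exact: path_graph_connected].
by apply: (CHH_morphicb_sound (@mem_ord_seq 5) (@mem_ord_seq 5) (y0 := ord0)); vm_compute.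
Qed.

Lemma K2_fin_conn_CHH : fin_conn_CHH_graph K2.
Proof.
split; [exact: K2_simple | split; first exact: K2_connected].
exact: (bipartite_CHH_morphic_K2 (c := id)).
Qed.

Lemma cycle6_not_CHH_morphic_path5 : ~ CHH_morphic (cycle_graph 6) (path_graph 5).
Proof.
move=> chh.
have cA : connected_in (cycle_graph 6) [set x : 'I_6 | x < 5].
  apply: connected_prefix => // [x y|x y xy y5]; first by rewrite /cycle_graph orbC.
  by rewrite /cycle_graph xy modn_small ?eqxx // -xy ltn_ord.
have hA : hom_on (cycle_graph 6) (path_graph 5) [set x : 'I_6 | x < 5] (fun x => inord x).
  by move=> x y; rewrite !inE /cycle_graph /path_graph => x5 y5; rewrite !inordK // !modn_small.
have [g [hg gA]] := chh _ _ cA hA.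
have := hg (Ordinal (isT : 4 < 6)) (Ordinal (isT : 5 < 6)) isT.
have := hg (Ordinal (isT : 5 < 6)) (Ordinal (isT : 0 < 6)) isT.
rewrite (gA (Ordinal (isT : 0 < 6))) ?(gA (Ordinal (isT : 4 < 6))) ?inE //.
rewrite /path_graph !inordK //.
by case: (g _) => [[|[|[|[|[|?]]]]] ?].
Qed.

Theorem lemma3p3 :
  exists (T1 T2 T3 : finType) (e1 : rel T1) (e2 : rel T2) (e3 : rel T3),
    fin_conn_CHH_graph e1 /\ fin_conn_CHH_graph e2 /\ fin_conn_CHH_graph e3 /\
    CHH_symmetric e1 e2 /\ CHH_symmetric e2 e3 /\ ~ CHH_symmetric e1 e3.
Proof.
have [C6_simple [C6_conn _]] := cycle6_fin_conn_CHH.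
have [P5_simple [P5_conn _]] := path5_fin_conn_CHH.
have [C6_K2 K2_C6] : CHH_symmetric (cycle_graph 6) K2.
  apply: bipartite_CHH_symmetric_K2 C6_simple C6_conn _ (@cycle_graph_2colouring 6 isT).
  by rewrite card_ord.
have [P5_K2 K2_P5] : CHH_symmetric (path_graph 5) K2.
  apply: bipartite_CHH_symmetric_K2 P5_simple P5_conn _ (@path_graph_2colouring 5).
  by rewrite card_ord.
exists 'I_6, bool, 'I_5, (cycle_graph 6), K2, (path_graph 5).
split; first exact: cycle6_fin_conn_CHH.
split; first exact: K2_fin_conn_CHH.
split; first exact: path5_fin_conn_CHH.
split; first by split.
split; first by split.
by case=> /cycle6_not_CHH_morphic_path5.
Qed.
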